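(* For every integer $n \geq 3$ there exists a cyclic $n$-dimensional unique sink orientation $\psi$ which is not $i$-nice for any $i < n$.
   Context: Let $Q^n = 2^{[n]}$ be the vertex set of the $n$-cube, with $u,v$ adjacent iff $|u\oplus v|=1$; faces are $F_{J,v}=\{u : v\oplus u\subseteq J\}$ for $J\subseteq[n]$. A unique sink orientation (USO) is an orientation of the cube's edges such that every nonempty face has a unique sink (vertex with no outgoing edges within the face); it is cyclic if it contains a directed cycle. The outmap $s_\psi(v)$ is the set of coordinates $j$ such that the edge $\{v,v\oplus\{j\}\}$ is directed away from $v$; the global sink is the vertex $t$ with $s_\psi(t)=\emptyset$. Let $d(v,u)$ be the length of a shortest directed path from $v$ to $u$ ($\infty$ if none). The reachmap is $r_\psi(v)=s_\psi(v)\cup\{j : \exists u \text{ reachable from } v \text{ by a directed path with } j\in s_\psi(u)\}$. A vertex $v$ is $i$-covered by $u$ if $d(v,u)\le i$ and $r_\psi(u)\subsetneq r_\psi(v)$; $\psi$ is $i$-nice if every vertex other than the global sink is $i$-covered by some vertex. *)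

From mathcomp Require Import all_boot.
Set Implicit Arguments. Unset Strict Implicit. Unset Printing Implicit Defensive.

(* Vertices of the n-cube Q^n = 2^[n] : subsets of 'I_n. *)
Notation vert n := {set 'I_n}.

Definition symd n (u v : vert n) : vert n := (u :\: v) :|: (v :\: u).

Definition adjacent n (u v : vert n) : bool := #|symd u v| == 1.

Record orientation (n : nat) := Orientation {
  arc : rel (vert n);
  arc_adj : forall u v, arc u v -> adjacent u v;
  arc_one : forall u v, adjacent u v -> arc u v (+) arc v u }.

Definition face n (J v : vert n) : {set vert n} := [set u | symd v u \subset J].

Definition sink_in n (psi : orientation n) (F : {set vert n}) (u : vert n) : bool :=
  (u \in F) && [forall w, (w \in F) ==> ~~ arc psi u w].

Definition USO n (psi : orientation n) : Prop :=
  forall J v : vert n, face J v != set0 ->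
    exists! u, sink_in psi (face J v) u.

Definition cyclic n (psi : orientation n) : Prop :=
  exists v w : vert n, arc psi v w /\ connect (arc psi) w v.

Definition outmap n (psi : orientation n) (v : vert n) : vert n :=
  [set j | [exists w, arc psi v w && (symd v w == [set j])]].

Definition reachmap n (psi : orientation n) (v : vert n) : vert n :=
  outmap psi v :|: \bigcup_(u | connect (arc psi) v u) outmap psi u.

Definition dist_le n (psi : orientation n) (v u : vert n) (i : nat) : Prop :=
  exists p : seq (vert n), [/\ path (arc psi) v p, last v p = u & size p <= i].

Definition covered n (psi : orientation n) (i : nat) (v u : vert n) : Prop :=
  dist_le psi v u i /\ reachmap psi u \proper reachmap psi v.

Definition global_sink n (psi : orientation n) (t : vert n) : bool :=
  outmap psi t == set0.

Definition nice n (psi : orientation n) (i : nat) : Prop :=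
  forall v : vert n, ~~ global_sink psi v -> exists u, covered psi i v u.

From mathcomp Require Import all_boot zify.
Set Implicit Arguments. Unset Strict Implicit. Unset Printing Implicit Defensive.

(* Take the uniform orientation, in which every edge points towards the empty
   set (outmap s(u) = u), and reverse the n edges {k} -- {k, k+1}, indices mod n.
   This creates the directed cycle {0} -> {0,1} -> {1} -> {1,2} -> ... -> {0}.
   For n >= 3 the reversed edges are pairwise disjoint, and the outmap still
   satisfies the Szabo-Welzl condition (u (+) w) /\ (s u (+) s w) <> 0 for
   u <> w, so the orientation is a USO. From a nonempty vertex one can walk
   down to a singleton and then around the cycle through all singletons; since
   k is in s({k}), every nonempty vertex has full reachmap. The full vertex is
   not the sink, yet every vertex at distance < n from it is nonempty, so no
   vertex covers it. *)

Section SymmetricDifference.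
Variable n : nat.
Implicit Types (u v w x J : vert n) (j : 'I_n).

Lemma in_symd u w j : (j \in symd u w) = (j \in u) (+) (j \in w).
Proof. by rewrite !inE; case: (j \in u); case: (j \in w). Qed.

Lemma symdC u w : symd u w = symd w u.
Proof. by apply/setP => j; rewrite !in_symd addbC. Qed.

Lemma symdK u w : symd u (symd u w) = w.
Proof. by apply/setP => j; rewrite !in_symd addbA addbb. Qed.

Lemma symdACA u v w x : symd (symd u v) (symd w x) = symd (symd u w) (symd v x).
Proof. by apply/setP => j; rewrite !in_symd addbACA. Qed.

Lemma symdA u v w : symd u (symd v w) = symd (symd u v) w.
Proof. by apply/setP => j; rewrite !in_symd addbA. Qed.

Lemma symdv u : symd u u = set0.
Proof. by apply/setP => j; rewrite in_symd addbb inE. Qed.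

Lemma symd0 u : symd u set0 = u.
Proof. by apply/setP => j; rewrite in_symd inE addbF. Qed.

Lemma symd_symdl v u w : symd (symd v u) (symd v w) = symd u w.
Proof. by rewrite symdACA symdv symdC symd0. Qed.

Lemma symd_eq0 u w : (symd u w == set0) = (u == w).
Proof.
apply/eqP/eqP => [uw0|->]; last exact: symdv.
by rewrite -(symdK u w) uw0 symd0.
Qed.

Lemma symd_sub u w J : u \subset J -> w \subset J -> symd u w \subset J.
Proof.
move=> /subsetP uJ /subsetP wJ; apply/subsetP => j.
by rewrite in_symd; case: (boolP (j \in u)) => [/uJ|_ /wJ].
Qed.

Lemma setI_symd_eq0 u w : u :&: symd u w == set0 -> u \subset w.
Proof.
move=> /eqP uw0; apply/subsetP => j ju; apply: contraT => jw.
by have := in_set0 j; rewrite -uw0 inE in_symd ju (negbTE jw).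
Qed.

Definition tog u j : vert n := symd u [set j].

Lemma in_tog u j i : (i \in tog u j) = (i \in u) (+) (i == j).
Proof. by rewrite in_symd inE. Qed.

Lemma togK u j : tog (tog u j) j = u.
Proof. by apply/setP => i; rewrite !in_tog addbK. Qed.

Lemma tog_eq u w j : (tog u j == w) = (u == tog w j).
Proof. by apply/eqP/eqP => [<-|->]; rewrite togK. Qed.

Lemma symd_tog u j : symd u (tog u j) = [set j].
Proof. exact: symdK. Qed.

Lemma symd1_tog u w j : symd u w = [set j] -> w = tog u j.
Proof. by move=> uw; rewrite /tog -uw symdK. Qed.

Lemma tog_in u j : j \in u -> tog u j = u :\ j.
Proof.
move=> ju; apply/setP => i; rewrite in_tog !inE.
by case: (i =P j) => [->|]; rewrite ?ju ?addbF ?andbT.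
Qed.

Lemma adjacent_symd1 u w : adjacent u w -> exists j, symd u w = [set j].
Proof. by move/cards1P. Qed.

Lemma card_adjacent u w : adjacent u w -> #|u| <= #|w|.+1.
Proof.
case/adjacent_symd1=> j /symd1_tog ->.
case: (boolP (j \in u)) => ju; first by rewrite tog_in // (cardsD1 j u) ju.
apply: leqW; apply: subset_leq_card; apply/subsetP => i iu.
have ij : i != j by apply: contraNneq ju => <-.
by rewrite in_tog iu (negbTE ij).
Qed.

Lemma in_face J v u : (u \in face J v) = (symd v u \subset J).
Proof. by rewrite inE. Qed.

Lemma tog_in_face J v u j :
  u \in face J v -> (tog u j \in face J v) = (j \in J).
Proof.
rewrite !in_face => uJ; apply/idP/idP => [togJ|jJ].
- by rewrite -sub1set -(symd_tog u j) -(symd_symdl v) symd_sub.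
- by rewrite /tog symdA symd_sub // sub1set.
Qed.

End SymmetricDifference.

Section OutmapOrientation.
Variables (n : nat) (s : vert n -> vert n).
Implicit Types (u v w J : vert n) (j : 'I_n).

Definition outmap_arc : rel (vert n) :=
  fun u w => [exists j, (symd u w == [set j]) && (j \in s u)].

Lemma outmap_arc_tog u j : outmap_arc u (tog u j) = (j \in s u).
Proof.
apply/existsP/idP => [[i /andP [/eqP] ]|ju]; last by exists j; rewrite symd_tog eqxx.
by rewrite symd_tog => /set1_inj ->.
Qed.

Lemma outmap_arc_adj u w : outmap_arc u w -> adjacent u w.
Proof. by case/existsP=> j /andP [/eqP uw _]; rewrite /adjacent uw cards1. Qed.

Hypothesis s_tog : forall u j, (j \in s (tog u j)) = (j \notin s u).

Lemma outmap_arc_one u w : adjacent u w -> outmap_arc u w (+) outmap_arc w u.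
Proof.
case/adjacent_symd1=> j /symd1_tog ->.
have := outmap_arc_tog (tog u j) j; rewrite togK => ->.
by rewrite outmap_arc_tog s_tog addbN addbb.
Qed.

Definition orientation_of : orientation n :=
  @Orientation n outmap_arc outmap_arc_adj outmap_arc_one.

Lemma outmap_orientation_of u : outmap orientation_of u = s u.
Proof.
apply/setP => j; rewrite inE; apply/existsP/idP => [[w /andP [uw /eqP]]|ju].
- by move/symd1_tog=> wE; move: uw; rewrite wE /= outmap_arc_tog.
- by exists (tog u j); rewrite symd_tog eqxx andbT /= outmap_arc_tog.
Qed.

Lemma sink_in_orientation_of J v u :
  sink_in orientation_of (face J v) u = (u \in face J v) && (s u :&: J == set0).
Proof.
rewrite /sink_in; case: (boolP (u \in face J v)) => //= uF.
apply/forallP/eqP => [noarc|suJ0].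
- apply/setP => j; rewrite !inE; apply/negP => /andP [ju jJ].
  by have := noarc (tog u j); rewrite tog_in_face // jJ /= outmap_arc_tog ju.
- move=> w; apply/implyP => wF; apply/negP => /existsP [j /andP [/eqP uw ju]].
  move: wF; rewrite (symd1_tog uw) tog_in_face // => jJ.
  by have := in_set0 j; rewrite -suJ0 inE ju jJ.
Qed.

End OutmapOrientation.

Definition szabo_welzl n (s : vert n -> vert n) : Prop :=
  forall u w, u != w -> symd u w :&: symd (s u) (s w) != set0.

Section SzaboWelzl.
Variables (n : nat) (s : vert n -> vert n).
Hypothesis s_sw : szabo_welzl s.

Lemma szabo_welzl_tog u j : (j \in s (tog u j)) = (j \notin s u).
Proof.
have u_tog : u != tog u j by rewrite -symd_eq0 symd_tog -cards_eq0 cards1.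
have /set0Pn [i] := s_sw u_tog.
rewrite symd_tog in_setI in_set1 in_symd => /andP [/eqP -> ].
by case: (j \in s u); case: (j \in s (tog u j)).
Qed.

Theorem uso_of_szabo_welzl : USO (orientation_of szabo_welzl_tog).
Proof.
move=> J v _.
(* x |-> s (v (+) x) /\ J is injective on subsets of J, hence onto, so exactly
   one x is sent to the empty set, i.e. v (+) x is the only sink of the face. *)
pose h x := s (symd v x) :&: J.
have h_inj : {in powerset J &, injective h}.
  move=> x y; rewrite !powersetE => xJ yJ hxy; apply/eqP; apply: contraT => xy.
  have vxy : symd v x != symd v y by rewrite -symd_eq0 symd_symdl symd_eq0.
  have /set0Pn [j] := s_sw vxy.
  rewrite symd_symdl in_setI => /andP [jxy]; rewrite in_symd.
  have jJ : j \in J := subsetP (symd_sub xJ yJ) j jxy.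
  have : (j \in h x) = (j \in h y) by rewrite hxy.
  by rewrite /h !in_setI jJ !andbT => ->; rewrite addbb.
have h_onto : h @: powerset J = powerset J.
  apply/eqP; rewrite eqEcard card_in_imset // leqnn andbT.
  by apply/subsetP => _ /imsetP [x _ ->]; rewrite powersetE subsetIr.
have /imsetP [x xJ hx0] : set0 \in h @: powerset J.
  by rewrite h_onto powersetE sub0set.
exists (symd v x); split.
- by rewrite sink_in_orientation_of in_face symdK -powersetE xJ -/(h x) -hx0 /=.
- move=> u; rewrite sink_in_orientation_of in_face => /andP [uJ /eqP su0].
  rewrite -(symdK v u); congr symd; apply: h_inj; rewrite // ?powersetE //.
  by rewrite -hx0 /h symdK su0.
Qed.

End SzaboWelzl.

Lemma card_path_last n (psi : orientation n) (v : vert n) p :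
  path (arc psi) v p -> #|v| <= #|last v p| + size p.
Proof.
elim: p v => [|w p IH] v /=; first by rewrite addn0.
case/andP=> /arc_adj /card_adjacent vw /IH wp; rewrite addnS; exact: leq_trans vw _.
Qed.

Lemma card_dist_le n (psi : orientation n) (v u : vert n) i :
  dist_le psi v u i -> #|v| <= #|u| + i.
Proof.
case=> p [vp <- pi]; apply: leq_trans (card_path_last vp) _; exact: leq_add.
Qed.

Lemma outmap_sub_reachmap n (psi : orientation n) (v u : vert n) :
  connect (arc psi) v u -> outmap psi u \subset reachmap psi v.
Proof. by move=> vu; rewrite /reachmap subsetU // (bigcup_sup u vu) orbT. Qed.

Lemma not_nice n (psi : orientation n) i (v : vert n) :
  ~~ global_sink psi v ->
  (forall u, dist_le psi v u i -> reachmap psi u = setT) -> ~ nice psi i.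
Proof.
move=> v_nsink full /(_ v v_nsink) [u [vu]].
by rewrite (full u vu) properE subsetT andbF.
Qed.

Lemma val_iter_ordS n (k : 'I_n) m : val (iter m (@ordS n) k) = (k + m) %% n.
Proof.
elim: m => [|m IH] /=; first by rewrite addn0 modn_small.
by rewrite IH -addn1 modnDml addn1 addnS.
Qed.

Lemma iter_ordS_neq n (k : 'I_n) m : 0 < m < n -> iter m (@ordS n) k != k.
Proof.
move=> m_bnd; apply/eqP => /(congr1 val); rewrite val_iter_ordS /=.
have k_lt := ltn_ord k; case: (ltnP (k + m) n) => [kmn|nkm].
- rewrite modn_small //; lia.
- rewrite -(subnK nkm) modnDr modn_small; lia.
Qed.

Section CyclicUSO.
Variable n : nat.
Hypothesis n_gt2 : 2 < n.
Implicit Types (u w : vert n) (j k : 'I_n).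

Lemma ordS_neq k : ordS k != k.
Proof. by apply: (iter_ordS_neq _ (m := 1)); lia. Qed.

Lemma ordS2_neq k : ordS (ordS k) != k.
Proof. by apply: (iter_ordS_neq _ (m := 2)); lia. Qed.

Definition twisted k u : bool := (u == [set k]) || (u == [set k; ordS k]).

Lemma twisted_in k u : twisted k u -> k \in u.
Proof. by case/orP=> /eqP ->; rewrite !inE eqxx. Qed.

Lemma twisted_sub k u : twisted k u -> u \subset [set k; ordS k].
Proof. by case/orP=> /eqP ->; rewrite ?subsetUl. Qed.

Lemma twisted_card k u : twisted k u -> #|u| <= 2.
Proof.
by move/twisted_sub/subset_leq_card/leq_trans; apply; rewrite cards2; case: eqP.
Qed.

Lemma twisted_shift k k' u w :
  twisted k u -> twisted k' w -> k != k' ->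
  symd u w \subset symd [set ordS k] [set ordS k'] -> k = ordS k'.
Proof.
move=> tk tk' kk' /subsetP uw_sub; have ku := twisted_in tk.
case: (boolP (k \in w)) => kw.
- by have := subsetP (twisted_sub tk') k kw; rewrite !inE (negbTE kk') => /eqP.
- have := uw_sub k; rewrite in_symd ku (negbTE kw) => /(_ isT).
  by rewrite in_symd !inE eq_sym (negbTE (ordS_neq k)) => /eqP.
Qed.

Lemma twisted_inj k k' u : twisted k u -> twisted k' u -> k = k'.
Proof.
move=> tk tk'; apply/eqP; apply: contraT => kk'.
have sub0 A B : symd u u \subset symd A B by rewrite symdv sub0set.
have k_S := twisted_shift tk tk' kk' (sub0 _ _).
have k'_S : k' = ordS k by apply: twisted_shift tk' tk _ (sub0 _ _); rewrite eq_sym.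
by have := ordS2_neq k; rewrite -k'_S -k_S eqxx.
Qed.

Lemma tog_set1 k : tog [set k] (ordS k) = [set k; ordS k].
Proof.
apply/setP => i; rewrite in_tog !inE; case: (i =P k) => [->|//].
by rewrite eq_sym (negbTE (ordS_neq k)).
Qed.

Lemma tog_set2 k : tog [set k; ordS k] (ordS k) = [set k].
Proof. by rewrite -tog_set1 togK. Qed.

Lemma twisted_tog k u : twisted k (tog u (ordS k)) = twisted k u.
Proof. by rewrite /twisted !tog_eq tog_set1 tog_set2 orbC. Qed.

(* the coordinates in which cyc_outmap differs from the uniform outmap u |-> u *)
Definition flipped u : vert n :=
  if [pick k | twisted k u] is Some k then [set ordS k] else set0.

Variant flipped_spec u : vert n -> Type :=
  | FlippedTwisted k of twisted k u : flipped_spec u [set ordS k]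
  | FlippedStraight of (forall k, ~~ twisted k u) : flipped_spec u set0.

Lemma flippedP u : flipped_spec u (flipped u).
Proof.
rewrite /flipped; case: pickP => [k tk|u_str]; first exact: FlippedTwisted tk.
by apply: FlippedStraight => k; rewrite u_str.
Qed.

Lemma flipped_twisted k u : twisted k u -> flipped u = [set ordS k].
Proof. by move=> tk; case: flippedP => [k' /(twisted_inj tk) ->|/(_ k)]; rewrite ?tk. Qed.

Lemma card_flipped u : #|flipped u| <= 1.
Proof. by case: flippedP => [k _|_]; rewrite ?cards1 ?cards0. Qed.

Definition cyc_outmap u : vert n := symd u (flipped u).

Lemma flipped_separates1 k u w :
  twisted k u -> (forall k, ~~ twisted k w) -> symd u w \subset [set ordS k] -> u = w.
Proof.
move=> tk w_str; rewrite subset1 => /orP [/eqP/symd1_tog wE|].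
  by have := w_str k; rewrite wE twisted_tog tk.
by rewrite symd_eq0 => /eqP.
Qed.

Lemma flipped_separates u w :
  symd u w \subset symd (flipped u) (flipped w) -> u = w.
Proof.
case: flippedP => [k tk|u_str]; case: flippedP => [k' tk'|w_str].
- case: (eqVneq k k') => [<-|kk' sub]; first by rewrite symdv subset0 symd_eq0 => /eqP.
  have k_S := twisted_shift tk tk' kk' sub.
  have k'_S : k' = ordS k.
    apply: twisted_shift tk' tk _ _; first by rewrite eq_sym.
    by rewrite symdC [symd [set ordS k'] _]symdC.
  by have := ordS2_neq k; rewrite -k'_S -k_S eqxx.
- by rewrite symd0; apply: flipped_separates1.
- by rewrite symdC (symdC set0) symd0 => /(flipped_separates1 tk' u_str).
- by rewrite symdv subset0 symd_eq0 => /eqP.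
Qed.

Lemma cyc_outmap_sw : szabo_welzl cyc_outmap.
Proof.
move=> u w; apply: contra => uw0; apply/eqP/flipped_separates/setI_symd_eq0.
by rewrite /cyc_outmap symdACA in uw0.
Qed.

Definition cyc_uso : orientation n := orientation_of (szabo_welzl_tog cyc_outmap_sw).

Lemma arc_cyc_uso_tog u j : arc cyc_uso u (tog u j) = (j \in u) (+) (j \in flipped u).
Proof. by rewrite /= outmap_arc_tog in_symd. Qed.

Lemma arc_set1_twisted k : arc cyc_uso [set k] [set k; ordS k].
Proof.
rewrite -tog_set1 arc_cyc_uso_tog (flipped_twisted (k := k)) ?/twisted ?eqxx //.
by rewrite !inE eqxx (negbTE (ordS_neq k)).
Qed.

Lemma arc_twisted_set1 k : arc cyc_uso [set k; ordS k] [set ordS k].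
Proof.
have kS : k \notin [set ordS k] by rewrite inE eq_sym ordS_neq.
have toggled : [set ordS k] = tog [set k; ordS k] k.
  by rewrite tog_in ?setU1K // !inE eqxx.
rewrite [X in arc _ _ X]toggled arc_cyc_uso_tog.
rewrite (flipped_twisted (k := k)) ?/twisted ?eqxx ?orbT //.
by rewrite (negbTE kS) !inE eqxx.
Qed.

Lemma connect_set1 k j : connect (arc cyc_uso) [set k] [set j].
Proof.
have [m ->] : exists m, j = iter m (@ordS n) k.
  exists (j + n - k); apply: val_inj; rewrite val_iter_ordS.
  have -> : k + (j + n - k) = j + n by have := ltn_ord k; lia.
  by rewrite modnDr modn_small.
elim: m => [|m IH] /=; first exact: connect0.
apply: connect_trans IH (connect_trans (connect1 (arc_set1_twisted _)) _).
exact/connect1/arc_twisted_set1.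
Qed.

Lemma cyc_uso_cyclic : cyclic cyc_uso.
Proof.
have n_gt0 : 0 < n by apply: leq_trans n_gt2.
pose k := Ordinal n_gt0; exists [set k], [set k; ordS k]; split.
  exact: arc_set1_twisted.
exact: connect_trans (connect1 (arc_twisted_set1 k)) (connect_set1 _ _).
Qed.

Lemma connect_set1_of_neq0 u : u != set0 -> exists j, connect (arc cyc_uso) u [set j].
Proof.
have [m] := ubnP #|u|; elim: m u => // m IH u lt_um u0.
case: (leqP #|u| 1) => [le1|lt1].
  have : #|u| == 1 by rewrite eqn_leq le1 card_gt0.
  by case/cards1P=> j ->; exists j; apply: connect0.
have /set0Pn [a] : u :\: flipped u != set0.
  rewrite -card_gt0 cardsD; have := card_flipped u.
  have := subset_leq_card (subsetIr u (flipped u)); lia.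
rewrite inE => /andP [aF au]; have := cardsD1 a u; rewrite au => card_u.
have [||j uj] := IH (u :\ a); rewrite -?card_gt0; try lia.
exists j; apply: connect_trans uj; apply: connect1.
by rewrite -tog_in // arc_cyc_uso_tog au (negbTE aF).
Qed.

Lemma reachmap_cyc_uso u : u != set0 -> reachmap cyc_uso u = setT.
Proof.
case/connect_set1_of_neq0=> a ua; apply/eqP; rewrite eqEsubset subsetT /=.
apply/subsetP => j _.
apply: (subsetP (outmap_sub_reachmap (connect_trans ua (connect_set1 a j)))).
rewrite outmap_orientation_of in_symd (flipped_twisted (k := j)) ?/twisted ?eqxx //.
by rewrite !inE eqxx eq_sym (negbTE (ordS_neq j)).
Qed.

Lemma cyc_outmap_setT : cyc_outmap setT = setT.
Proof.
rewrite /cyc_outmap; case: flippedP => [k /twisted_card|_]; last exact: symd0.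
by rewrite cardsT card_ord leqNgt n_gt2.
Qed.

End CyclicUSO.

Theorem theorem12 : forall n : nat, 3 <= n ->
  exists psi : orientation n,
    [/\ USO psi, cyclic psi & forall i : nat, i < n -> ~ nice psi i].
Proof.
move=> n n_gt2; exists (cyc_uso n_gt2); split.
- exact: uso_of_szabo_welzl.
- exact: cyc_uso_cyclic.
move=> i lt_in; apply: (@not_nice _ _ _ setT).
  rewrite /global_sink outmap_orientation_of cyc_outmap_setT //.
  by rewrite -cards_eq0 cardsT card_ord; lia.
move=> u /card_dist_le; rewrite cardsT card_ord => n_le.
by apply: reachmap_cyc_uso; rewrite -card_gt0; lia.
Qed.
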